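(* Let $(M,d)$ be a metric space, $\mathsf{P}\subseteq M$ a set of $n$ points, $1\le\ell\le k\le n$ integers with $m=\lfloor k/\ell\rfloor\ge2$. Let $Q=\{q_1,\dots,q_m\}$ be the output of Gonzalez's algorithm on $\mathsf{P}$ with $m$ centers, let $C\subseteq\mathsf{P}$ with $|C|=k$ and $C\supseteq\bigcup_{i=1}^m N_{\mathsf{P}}(q_i,\ell)$, let $r_{\mathrm{alg}}=\max_{p\in\mathsf{P}} d_C(p,\ell)$, and let $C^*\subseteq\mathsf{P}$, $|C^*|=k$, be an optimal fault-tolerant $k$-center solution with cost $r_{\mathrm{opt}}=\max_{p\in\mathsf{P}}d_{C^*}(p,\ell)$. If $r_{\mathrm{alg}}>3r_{\mathrm{opt}}$, then for all $1\le i\ne j\le m$ the balls $B(q_i,r_{\mathrm{opt}})$ and $B(q_j,r_{\mathrm{opt}})$ are disjoint, and each ball $B(q_i,r_{\mathrm{opt}})$ contains at least $\ell$ points of $C^*$.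
   Context: Gonzalez's algorithm with $m$ centers: $q_1\in\mathsf{P}$ is arbitrary, and for $i=2,\dots,m$, $q_i$ is a point of $\mathsf{P}$ maximizing $d(p,\{q_1,\dots,q_{i-1}\})$ over $p\in\mathsf{P}$. $B(q,x)$ is the closed ball of radius $x$ centered at $q$. For a finite $S\subseteq M$ and $1\le i\le|S|$, $d_S(p,i)$ is the radius of the smallest closed ball centered at $p$ containing at least $i$ points of $S$; nearest neighbors are ordered lexicographically by $(d(p,s),\text{index of }s)$ and $N_S(p,i)$ is the set of the first $i$ points of $S$ in this order. An optimal fault-tolerant $k$-center solution is a $C^*\subseteq\mathsf{P}$ with $|C^*|=k$ minimizing $\max_{p\in\mathsf{P}}d_{C^*}(p,\ell)$. *)

From HB Require Import structures.
From mathcomp Require Import all_boot all_order all_algebra.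
Set Implicit Arguments. Unset Strict Implicit. Unset Printing Implicit Defensive.
Import Order.TTheory GRing.Theory Num.Theory.
Local Open Scope ring_scope.

Section Defs.
Variables (R : realFieldType) (M : Type) (d : M -> M -> R).

Definition is_metric : Prop :=
  [/\ forall x y, 0 <= d x y,
      forall x y, d x y = 0 <-> x = y,
      forall x y, d x y = d y x &
      forall x y z, d x z <= d x y + d y z].

Definition dist_set (x : M) (S : seq M) : R :=
  match S with
  | [::] => 0
  | s :: S' => foldr (fun y acc => Num.min (d x y) acc) (d x s) S'
  end.

(* d_S(x,i): radius of the smallest closed ball centred at x containing at
   least i points of S (1 <= i <= |S|); this is the i-th smallest element
   (with multiplicity) of the multiset of distances {d(x,s) : s in S}. *)
Definition kdist (x : M) (S : seq M) (i : nat) : R :=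
  nth 0 (sort <=%R [seq d x s | s <- S]) i.-1.

Variables (n : nat) (pt : 'I_n -> M).
(* The point set P = {pt 0, ..., pt (n-1)}; the index of pt s is s. *)

Definition nn_lt (x : M) (s' s : 'I_n) : bool :=
  (d x (pt s') < d x (pt s)) || ((d x (pt s') == d x (pt s)) && (s' < s)%N).

(* N_P(x,i): the first i points of P in this order. *)
Definition NN (x : M) (i : nat) : {set 'I_n} :=
  [set s | (#|[set s' | nn_lt x s' s]| < i)%N].

Definition pts (C : {set 'I_n}) : seq M := [seq pt c | c <- enum C].

Definition ft_cost (C : {set 'I_n}) (l : nat) : R :=
  \big[Num.max/0]_(p : 'I_n) kdist (pt p) (pts C) l.

Definition is_opt_ft (k l : nat) (Cs : {set 'I_n}) : Prop :=
  #|Cs| = k /\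
  forall C : {set 'I_n}, #|C| = k -> ft_cost Cs l <= ft_cost C l.

Definition is_gonzalez (m : nat) (q : 'I_m -> 'I_n) : Prop :=
  forall i : 'I_m, (0 < i)%N ->
    let prev := [seq pt (q j) | j <- [seq j <- enum 'I_m | (nat_of_ord j < nat_of_ord i)%N]] in
    forall p : 'I_n, dist_set (pt p) prev <= dist_set (pt (q i)) prev.

End Defs.

(* Write r = r_opt.  Every point p has d_{C*}(p,l) <= r, and
   since d_{C*}(p,l) is the l-th smallest distance from p to C*, at least l
   points of C* lie within distance r of p; in particular this holds at every
   Gonzalez center q_i.

   Let R be the distance from the last Gonzalez center q_m to
   the earlier centers {q_1,...,q_{m-1}}.  By the greedy choice, R bounds from
   below the distance between any two distinct centers, and from above the
   distance from any point of P to its nearest center among q_1,...,q_{m-1}.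
   Pick p with d_C(p,l) > 3r and its nearest such center q_j.  The l nearest
   neighbours of q_j lie in C and (by the ball property) within r of q_j, so
   d_C(p,l) <= d(p,q_j) + r <= R + r, whence R > 2r.  Two balls B(q_a,r),
   B(q_b,r) sharing a point would force d(q_a,q_b) <= 2r < R, a contradiction. *)

From HB Require Import structures.
From mathcomp Require Import all_boot all_order all_algebra zify lra.
Import Order.TTheory GRing.Theory Num.Theory.
Local Open Scope ring_scope.
Set Implicit Arguments. Unset Strict Implicit.

Section OrderStatistics.
Variables (R : realFieldType) (M : Type) (d : M -> M -> R).

Lemma kdist_le (x : M) (S : seq M) (i : nat) (t : R) :
  (0 < i)%N -> (i <= count (fun s => (d x s <= t)%R) S)%N -> kdist d x S i <= t.
Proof.
case: i => // i _ hc; rewrite /kdist /=.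
set L := sort _ _.
have sL : sorted <=%R L by apply: sort_sorted; exact: le_total.
have cL : count (fun y => y <= t) L = count (fun s => d x s <= t) S.
  by rewrite /L count_sort count_map.
clearbody L.
rewrite leNgt; apply/negP => hv.
have tail_big : count (fun y => y <= t) (drop i L) = 0%N.
  apply/eqP; rewrite -leqn0 leqNgt -has_count; apply/hasPn => y /(nthP 0) [j hj <-].
  have {}hj : (j < size L - i)%N by rewrite -size_drop.
  rewrite nth_drop -ltNge.
  apply: (lt_le_trans hv).
  apply: (sorted_leq_nth le_trans le_refl) => //; rewrite ?inE /=; lia.
have : (count (fun y => (y <= t)%R) L <= i)%N.
  rewrite -(cat_take_drop i L) count_cat tail_big addn0.
  apply: (leq_trans (count_size _ _)); rewrite size_take_min; exact: geq_minl.
by rewrite cL => /(leq_trans hc); rewrite ltnn.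
Qed.

Lemma kdist_count (x : M) (S : seq M) (i : nat) :
  (0 < i)%N -> (i <= size S)%N ->
  (i <= count (fun s => (d x s <= kdist d x S i)%R) S)%N.
Proof.
case: i => // i _ hs; rewrite /kdist /=.
set L := sort _ _.
have sL : sorted <=%R L by apply: sort_sorted; exact: le_total.
have szL : size L = size S by rewrite /L size_sort size_map.
set v := nth 0 L i.
have -> : count (fun s => d x s <= v) S = count (fun y => y <= v) L.
  by rewrite /L count_sort count_map.
clearbody L.
have head_small : all (fun y => y <= v) (take i.+1 L).
  apply/allP => y /(nthP 0) [j hj <-]; rewrite size_take_min leq_min in hj.
  case/andP: hj => hji hjL; rewrite nth_take //.
  by apply: (sorted_leq_nth le_trans le_refl) => //; rewrite inE szL.
rewrite -(cat_take_drop i.+1 L) count_cat.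
move: head_small; rewrite all_count => /eqP ->; rewrite size_take_min.
apply: leq_trans (leq_addr _ _); rewrite szL; lia.
Qed.

End OrderStatistics.

Section DistanceToFiniteSet.
Variables (R : realFieldType) (M : Type) (d : M -> M -> R).
Variables (I : eqType) (f : I -> M) (x : M).

Let min_fold (c : R) (s : seq I) : R :=
  foldr (fun y acc => Num.min (d x y) acc) c (map f s).

Lemma min_fold_lb (c : R) (s : seq I) :
  min_fold c s <= c /\ forall y, y \in s -> min_fold c s <= d x (f y).
Proof.
rewrite /min_fold; elim: s => [|a s [IH1 IH2]] /=; first by split => // y.
split; first by rewrite ge_min IH1 orbT.
move=> y; rewrite inE => /orP[/eqP->|ys]; first by rewrite ge_min lexx.
by rewrite ge_min IH2 ?orbT.
Qed.

Lemma min_fold_attained (c : R) (s : seq I) :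
  min_fold c s = c \/ exists2 y, y \in s & min_fold c s = d x (f y).
Proof.
rewrite /min_fold; elim: s => [|a s IH] /=; first by left.
rewrite minEle; case: ifP => _; first by right; exists a; rewrite ?inE ?eqxx.
case: IH => [->|[y ys ->]]; first by left.
by right; exists y; rewrite // inE ys orbT.
Qed.

Lemma dist_set_le (s : seq I) (y : I) :
  y \in s -> dist_set d x (map f s) <= d x (f y).
Proof.
case: s => [|a s] //= ys; change (min_fold (d x (f a)) s <= d x (f y)).
have [lb_seed lb_mem] := min_fold_lb (d x (f a)) s.
by move: ys; rewrite inE => /orP[/eqP->|/lb_mem].
Qed.

Lemma dist_set_attained (s : seq I) :
  s != [::] -> exists2 y, y \in s & dist_set d x (map f s) = d x (f y).
Proof.
case: s => [|a s] //= _; rewrite -/(min_fold (d x (f a)) s).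
case: (min_fold_attained (d x (f a)) s) => [->|[y ys ->]].
  by exists a; rewrite // inE eqxx.
by exists y; rewrite // inE ys orbT.
Qed.

Lemma dist_set_antimono (s1 s2 : seq I) :
  s1 != [::] -> {subset s1 <= s2} ->
  dist_set d x (map f s2) <= dist_set d x (map f s1).
Proof. by move=> /dist_set_attained [y ys ->] sub; exact: dist_set_le (sub _ ys). Qed.

End DistanceToFiniteSet.

Section NearestNeighbours.
Variables (R : realFieldType) (M : Type) (d : M -> M -> R).
Variables (n : nat) (pt : 'I_n -> M).

Lemma count_enum_set (A : {set 'I_n}) (P : pred 'I_n) :
  count P (enum A) = #|[set c in A | P c]|.
Proof.
by rewrite -sum1_count big_enum_cond -sum1_card; apply: eq_bigl => i; rewrite inE.
Qed.

Lemma nn_lt_irr x s : nn_lt d pt x s s = false.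
Proof. by rewrite /nn_lt ltxx ltnn andbF. Qed.

Lemma nn_lt_trans x a b c :
  nn_lt d pt x a b -> nn_lt d pt x b c -> nn_lt d pt x a c.
Proof.
rewrite /nn_lt => /orP[h1|/andP[/eqP e1 h1]] /orP[h2|/andP[/eqP e2 h2]].
- by rewrite (lt_trans h1 h2).
- by rewrite -e2 h1.
- by rewrite e1 h2.
- by rewrite e1 e2 eqxx (ltn_trans h1 h2) orbT.
Qed.

Lemma nn_lt_total x a b : a != b -> nn_lt d pt x a b || nn_lt d pt x b a.
Proof.
move=> ab; rewrite /nn_lt.
by case: (ltgtP (d x (pt a)) (d x (pt b))) => //= _; rewrite -neq_ltn.
Qed.

Let rank x s := #|[set s' | nn_lt d pt x s' s]|.

Lemma rank_lt x s : (rank x s < n)%N.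
Proof.
rewrite -[X in (_ < X)%N](card_ord n) -cardsT; apply: proper_card.
by apply/properP; split; [exact: subsetT | exists s; rewrite ?inE ?nn_lt_irr].
Qed.

(* Since the order is strict and total, distinct points have distinct ranks. *)
Lemma rank_inj x : injective (fun s => Ordinal (rank_lt x s)).
Proof.
have mono a b : nn_lt d pt x a b -> (rank x a < rank x b)%N.
  move=> hab; apply: proper_card; apply/properP; split.
    by apply/subsetP => c; rewrite !inE => hc; exact: nn_lt_trans hc hab.
  by exists a; rewrite ?inE ?nn_lt_irr.
move=> a b /(congr1 val) /= e; apply/eqP; apply/negPn/negP => ab.
by case/orP: (nn_lt_total x ab) => /mono; rewrite e ltnn.
Qed.

(* N_P(x,l) consists of the points of rank < l, so it has l elements. *)
Lemma NN_card x l : (l <= n)%N -> (l <= #|NN d pt x l|)%N.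
Proof.
move=> ln; pose rk s := Ordinal (rank_lt x s).
have -> : NN d pt x l = rk @^-1: [set j : 'I_n | (j < l)%N].
  by apply/setP => s; rewrite !inE.
rewrite card_preimset; last exact: rank_inj.
have -> : [set j : 'I_n | (j < l)%N] = [set widen_ord ln j | j in 'I_l].
  apply/setP => j; rewrite inE; apply/idP/imsetP => [jl|[j' _ ->]] //=.
  by exists (Ordinal jl) => //; apply: val_inj.
by rewrite card_imset ?card_ord // => a b /(congr1 val) /= e; apply: val_inj.
Qed.

Lemma NN_within (A : {set 'I_n}) x l (r : R) :
  (l <= #|[set c in A | (d x (pt c) <= r)%R]|)%N ->
  forall s, s \in NN d pt x l -> d x (pt s) <= r.
Proof.
move=> hc s; rewrite inE; apply: contraTT; rewrite -ltNge -leqNgt => hs.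
apply: (leq_trans hc); apply: subset_leq_card; apply/subsetP => c.
by rewrite !inE => /andP[_ hcr]; rewrite /nn_lt (le_lt_trans hcr hs).
Qed.

Lemma ft_cost_ge0 (C : {set 'I_n}) l : 0 <= ft_cost d pt C l.
Proof. by rewrite /ft_cost bigmax_idl le_max lexx. Qed.

Lemma kdist_le_ft_cost (C : {set 'I_n}) l p :
  kdist d (pt p) (pts pt C) l <= ft_cost d pt C l.
Proof. exact: (le_bigmax (0 : R) (fun p => kdist d (pt p) (pts pt C) l)). Qed.

Lemma ft_cost_witness (C : {set 'I_n}) l (t : R) :
  0 <= t -> t < ft_cost d pt C l -> exists p, t < kdist d (pt p) (pts pt C) l.
Proof.
move=> t0; case: (boolP [exists p, t < kdist d (pt p) (pts pt C) l]).
  by move=> /existsP.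
move=> /existsPn none; rewrite ltNge => /negP[].
by apply/bigmax_leP; split => // p _; rewrite leNgt; exact: none.
Qed.

Lemma ball_count (C : {set 'I_n}) l p :
  (1 <= l)%N -> (l <= #|C|)%N ->
  (l <= #|[set c in C | (d (pt p) (pt c) <= ft_cost d pt C l)%R]|)%N.
Proof.
move=> l1 lC; rewrite -count_enum_set.
have := kdist_count d (pt p) l1 (_ : (l <= size (pts pt C))%N).
rewrite /pts size_map -cardE count_map => /(_ lC); move/leq_trans; apply.
by apply: sub_count => c /= hc; exact: le_trans hc (kdist_le_ft_cost C l p).
Qed.

Lemma kdist_via_center (A C : {set 'I_n}) l (r : R) p s :
  (forall x y z, d x z <= d x y + d y z) ->
  (1 <= l)%N -> (l <= n)%N -> NN d pt (pt s) l \subset C ->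
  (l <= #|[set c in A | (d (pt s) (pt c) <= r)%R]|)%N ->
  kdist d (pt p) (pts pt C) l <= d (pt p) (pt s) + r.
Proof.
move=> dtri l1 ln NNC hA; apply: kdist_le => //; rewrite count_map count_enum_set.
apply: leq_trans (NN_card (pt s) ln) _; apply: subset_leq_card.
apply/subsetP => c hc; rewrite inE (subsetP NNC) //=.
apply: le_trans (dtri _ (pt s) _) _; rewrite lerD2l.
exact: NN_within hA _ hc.
Qed.

End NearestNeighbours.

Section Gonzalez.
Variables (R : realFieldType) (M : Type) (d : M -> M -> R).
Variables (n m : nat) (pt : 'I_n -> M) (q : 'I_m -> 'I_n).
Hypothesis dsym : forall x y, d x y = d y x.
Hypothesis gon : is_gonzalez d pt q.

Let prev (i : 'I_m) := [seq j <- enum 'I_m | (nat_of_ord j < nat_of_ord i)%N].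
Let center (j : 'I_m) := pt (q j).

Lemma mem_prev (j i : 'I_m) : (j \in prev i) = (j < i)%N.
Proof. by rewrite mem_filter mem_enum andbT. Qed.

Lemma prev_nonempty (j i : 'I_m) : (j < i)%N -> prev i != [::].
Proof. by rewrite -mem_prev; case: (prev i). Qed.

Definition gonzalez_radius (i : 'I_m) : R :=
  dist_set d (center i) (map center (prev i)).

Lemma gonzalez_radius_sep (i a b : 'I_m) :
  a != b -> (a <= i)%N -> (b <= i)%N -> gonzalez_radius i <= d (center a) (center b).
Proof.
move=> ab ai bi; wlog {ab ai} ab : a b bi / (a < b)%N.
  move=> hw; move: ab; rewrite -val_eqE neq_ltn => /orP[h|h]; first exact: hw.
  by rewrite dsym; apply: hw.
have a_prev : a \in prev b by rewrite mem_prev.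
rewrite dsym; apply: le_trans (dist_set_le d center (center b) a_prev).
apply: le_trans (gon (leq_ltn_trans (leq0n a) ab) (q i)).
apply: dist_set_antimono; first exact: prev_nonempty ab.
by move=> j; rewrite !mem_prev => jb; exact: leq_trans jb bi.
Qed.

Lemma gonzalez_radius_cover (i : 'I_m) p :
  (0 < i)%N -> exists j : 'I_m, d (pt p) (center j) <= gonzalez_radius i.
Proof.
move=> i0; pose j0 : 'I_m := Ordinal (ltn_trans i0 (ltn_ord i)).
have [j _ hj] := dist_set_attained d center (pt p) (@prev_nonempty j0 i i0).
by exists j; rewrite -hj; exact: gon.
Qed.

End Gonzalez.

Unset Implicit Arguments. Set Strict Implicit.
Theorem mainTheorem10 (R : realFieldType) (M : Type) (d : M -> M -> R)
  (n : nat) (pt : 'I_n -> M) (k l : nat) (q : 'I_(k %/ l) -> 'I_n)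
  (C Cs : {set 'I_n}) :
  is_metric d -> injective pt ->
  (1 <= l)%N -> (l <= k)%N -> (k <= n)%N -> (2 <= k %/ l)%N ->
  is_gonzalez d pt q ->
  #|C| = k ->
  (forall i : 'I_(k %/ l), NN d pt (pt (q i)) l \subset C) ->
  is_opt_ft d pt k l Cs ->
  ft_cost d pt C l > 3%:R * ft_cost d pt Cs l ->
  (forall i j : 'I_(k %/ l), i != j -> forall x : M,
      ~ (d (pt (q i)) x <= ft_cost d pt Cs l /\ d (pt (q j)) x <= ft_cost d pt Cs l))
  /\
  (forall i : 'I_(k %/ l),
      leq l #|[set c in Cs | d (pt (q i)) (pt c) <= ft_cost d pt Cs l]|).
Proof.
move=> [_ _ dsym dtri] _ l1 lk kn m2 gon _ NNC [cCs _] hgt.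
set r := ft_cost d pt Cs l in hgt *.
have r0 : 0 <= r := ft_cost_ge0 d pt Cs l.
have balls p : (l <= #|[set c in Cs | (d (pt p) (pt c) <= r)%R]|)%N.
  by apply: ball_count; rewrite ?cCs.
split=> [a b ab x [ha hb]|i]; last exact: balls.
have [p far_p] := ft_cost_witness (mulr_ge0 (ler0n _ 3) r0) hgt.
have m_pos : (0 < k %/ l)%N by apply: leq_trans m2.
have last_lt : ((k %/ l).-1 < k %/ l)%N by rewrite ltn_predL.
pose last : 'I_(k %/ l) := Ordinal last_lt.
have last0 : (0 < last)%N by rewrite /= -subn1 subn_gt0.
have lastmax (j : 'I_(k %/ l)) : (j <= last)%N by rewrite /= -ltnS prednK.
(* covering p by an earlier center q_j shows that the final radius exceeds 2r *)
have [j near_j] := gonzalez_radius_cover gon p last0.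
have via_j := kdist_via_center p dtri l1 (leq_trans lk kn) (NNC j) (balls (q j)).
have big_radius : 2%:R * r < gonzalez_radius d pt q last by lra.
(* two centers at distance > 2r cannot have intersecting r-balls *)
have := gonzalez_radius_sep dsym gon ab (lastmax a) (lastmax b).
have := dtri (pt (q a)) x (pt (q b)); rewrite (dsym x (pt (q b))); lra.
Qed.
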